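(* For every $\beta \in \{\mathbf{G}, \mathbf{Psd}, \mathbf{Sd}\}$, $[\tau(\mathbf{SemWb})\mathbf{Txt}\beta\mathbf{Bc}] = [\tau(\mathbf{SemConv})\mathbf{Txt}\beta\mathbf{Bc}]$.
   Context: Fix an acceptable numbering $(\varphi_e)$ of partial computable functions, $W_e=\mathrm{dom}(\varphi_e)$. A text is a total function $T:\mathbb N\to\mathbb N\cup\{\#\}$, $\mathrm{content}(T)=\mathrm{range}(T)\setminus\{\#\}$, $T[n]=(T(0),\dots,T(n-1))$; $\mathbf{Txt}$ is the set of all texts, $\mathbf{Txt}(L)$ those with content $L$. Learners are partial computable functions; $\mathbf G(h,T)(i)=h(T[i])$, $\mathbf{Psd}(h,T)(i)=h(\mathrm{content}(T[i]),i)$, $\mathbf{Sd}(h,T)(i)=h(\mathrm{content}(T[i]))$. For total $p:\mathbb N\to\mathbb N$ and text $T$: $\mathbf{Bc}(p,T)$ iff $\exists n_0\,\forall n\ge n_0: W_{p(n)}=\mathrm{content}(T)$; $\mathbf{SemWb}(p,T)$ iff for all $n,m$: if there is $k$ with $n\le k\le m$ and $W_{p(n)}\ne W_{p(k)}$, then $(\mathrm{content}(T[m])\cap W_{p(m)})\setminus W_{p(n)}\ne\emptyset$; $\mathbf{SemConv}(p,T)$ iff for all $n<m$ with $\mathrm{content}(T[m])\subseteq W_{p(n)}$ we have $W_{p(n)}=W_{p(m)}$. A learner $h$ $\tau(\alpha)\mathbf{Txt}\beta\mathbf{Bc}$-learns $L$ iff for every $T\in\mathbf{Txt}$, $\beta(h,T)$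 is total and $\alpha(\beta(h,T),T)$ holds, and for every $T\in\mathbf{Txt}(L)$, $\mathbf{Bc}(\beta(h,T),T)$ holds. $[\cdot]$ is the set of classes learnable by a single learner under the criterion. *)

From Stdlib Require Import Arith List.
Import ListNotations.

Definition pair (x y : nat) : nat := (x + y) * (x + y + 1) / 2 + y.

Fixpoint unpair (z : nat) : nat * nat :=
  match z with
  | 0 => (0, 0)
  | S z' => let (x, y) := unpair z' in
            match x with
            | S x' => (x', S y)
            | 0 => (S y, 0)
            end
  end.

Inductive code : Type :=
| CZero | CSucc | CId | CFst | CSnd
| CPair (f g : code)
| CComp (f g : code)
| CPrim (f g : code)        (* h <a,0> = f a ; h <a,n+1> = g <<a,n>, h <a,n>> *)
| CMu (f : code).           (* x |-> least n with f <x,n> = 0 (earlier values defined) *)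

Fixpoint eval (k : nat) (c : code) (x : nat) : option nat :=
  match k with
  | 0 => None
  | S k =>
    match c with
    | CZero => Some 0
    | CSucc => Some (S x)
    | CId => Some x
    | CFst => Some (fst (unpair x))
    | CSnd => Some (snd (unpair x))
    | CPair f g =>
        match eval k f x, eval k g x with
        | Some a, Some b => Some (pair a b)
        | _, _ => None
        end
    | CComp f g =>
        match eval k g x with
        | Some a => eval k f a
        | None => None
        end
    | CPrim f g =>
        let a := fst (unpair x) in
        (fix rec (n : nat) : option nat :=
           match n with
           | 0 => eval k f a
           | S n' => match rec n' with
                     | Some r => eval k g (pair (pair a n') r)
                     | None => None
                     end
           end) (snd (unpair x))
    | CMu f =>
        (fix srch (j n : nat) : option nat :=
           match j with
           | 0 => None
           | S j' => match eval k f (pair x n) with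
                     | Some 0 => Some n
                     | Some _ => srch j' (S n)
                     | None => None
                     end
           end) k 0
    end
  end.

(* decoding of natural numbers into codes (surjective, computable) *)
Fixpoint dec (fuel n : nat) : code :=
  match fuel with
  | 0 => CZero
  | S fu =>
    let p := n / 9 in
    let i := fst (unpair p) in
    let j := snd (unpair p) in
    match n mod 9 with
    | 0 => CZero | 1 => CSucc | 2 => CId | 3 => CFst | 4 => CSnd
    | 5 => CPair (dec fu i) (dec fu j)
    | 6 => CComp (dec fu i) (dec fu j)
    | 7 => CPrim (dec fu i) (dec fu j)
    | _ => CMu (dec fu p)
    end
  end.

Definition decode (n : nat) : code := dec (S n) n.

Definition psi (e x y : nat) : Prop := exists k, eval k (decode e) x = Some y.

Definition acceptable (phi : nat -> nat -> nat -> Prop) : Prop :=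
  exists f g : nat -> nat,
    (exists cf, forall x, psi cf x (f x)) /\
    (exists cg, forall x, psi cg x (g x)) /\
    (forall e x y, phi e x y <-> psi (f e) x y) /\
    (forall e x y, psi e x y <-> phi (g e) x y).

Definition W (phi : nat -> nat -> nat -> Prop) (e x : nat) : Prop :=
  exists y, phi e x y.

Definition set_eq (A B : nat -> Prop) : Prop := forall x, A x <-> B x.

(* A text: None stands for the pause symbol # *)
Definition text := nat -> option nat.

Definition content (T : text) (x : nat) : Prop := exists n, T n = Some x.

(* T[n] = (T 0, ..., T (n-1)) *)
Definition prefix (T : text) (n : nat) : list (option nat) := map T (seq 0 n).

Definition content_prefix (T : text) (m : nat) (x : nat) : Prop :=
  exists i, i < m /\ T i = Some x.

Definition enc_item (o : option nat) : nat :=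
  match o with None => 0 | Some n => S n end.

Fixpoint enc_list (s : list nat) : nat :=
  match s with [] => 0 | a :: s' => S (pair a (enc_list s')) end.

Definition enc_seq (s : list (option nat)) : nat := enc_list (map enc_item s).

Fixpoint undup_nat (s : list nat) : list nat :=
  match s with
  | [] => []
  | a :: s' => if existsb (Nat.eqb a) s' then undup_nat s' else a :: undup_nat s'
  end.

Definition enc_set (s : list nat) : nat :=
  fold_right (fun x acc => 2 ^ x + acc) 0 (undup_nat s).

Definition content_list (T : text) (i : nat) : list nat :=
  flat_map (fun o => match o with None => [] | Some n => [n] end) (prefix T i).

Inductive interaction := G | Psd | Sd.

(* run b h T i y  <->  beta(h,T)(i) = y, where the learner h is the partial
   computable function psi_h *)
Definition run (b : interaction) (h : nat) (T : text) (i y : nat) : Prop :=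
  match b with
  | G => psi h (enc_seq (prefix T i)) y
  | Psd => psi h (pair (enc_set (content_list T i)) i) y
  | Sd => psi h (enc_set (content_list T i)) y
  end.

Definition criterion := (nat -> nat) -> text -> Prop.

Definition Bc (phi : nat -> nat -> nat -> Prop) : criterion := fun p T =>
  exists n0, forall n, n0 <= n -> set_eq (W phi (p n)) (content T).

Definition SemWb (phi : nat -> nat -> nat -> Prop) : criterion := fun p T =>
  forall n m,
    (exists k, n <= k /\ k <= m /\ ~ set_eq (W phi (p n)) (W phi (p k))) ->
    exists x, content_prefix T m x /\ W phi (p m) x /\ ~ W phi (p n) x.

Definition SemConv (phi : nat -> nat -> nat -> Prop) : criterion := fun p T =>
  forall n m, n < m ->
    (forall x, content_prefix T m x -> W phi (p n) x) ->
    set_eq (W phi (p n)) (W phi (p m)).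

(* h tau(alpha)Txt beta Bc-learns every language of the class C *)
Definition learns_class (phi : nat -> nat -> nat -> Prop) (alpha : criterion)
    (b : interaction) (h : nat) (C : (nat -> Prop) -> Prop) : Prop :=
  (forall T : text, exists p : nat -> nat,
       (forall i, run b h T i (p i)) /\ alpha p T) /\
  (forall L, C L -> forall T : text, set_eq (content T) L ->
       exists p : nat -> nat, (forall i, run b h T i (p i)) /\ Bc phi p T).

Definition learnable (phi : nat -> nat -> nat -> Prop) (alpha : criterion)
    (b : interaction) (C : (nat -> Prop) -> Prop) : Prop :=
  exists h : nat, learns_class phi alpha b h C.

(** SemWb implies SemConv text by text, which gives one inclusion.  Conversely, let [h]
    learn [C] under SemConv.  At stage [k] of a text [T] the new learner runs [h] on the
    canonical text of [T] (its data without repetitions, in order of first appearance) at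
    stage [n_k], the number of distinct data in [T[k]]; in each of the three interaction
    modes this input is computable from the learner's own input.  If [h] conjectures [e],
    the new learner conjectures [D ∪ W_e] when [D := content(T[k]) ⊆ W_e], and [D]
    otherwise.  Conjectures then depend on [D] only; a semantic change between stages
    [n <= k <= m] that no datum of [T[m]] witnesses forces [content(T[m]) ⊆ W_(e_n)],
    and semantic convergence of [h] on the canonical text makes the two conjectures
    equal.  Since the new conjecture is [W_e] whenever [W_e] contains the data, Bc
    learning is preserved.  The indices are computed concretely for the standard
    numbering [psi] and transported to [phi] by the translations of acceptability. *)

From Stdlib Require Import Arith Lia List Bool Classical ClassicalEpsilon.
Import ListNotations.

Lemma triangle_succ s : S s * (S s + 1) / 2 = s * (s + 1) / 2 + S s.
Proof.
  replace (S s * (S s + 1)) with (s * (s + 1) + S s * 2) by nia.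
  rewrite Nat.div_add; lia.
Qed.

Lemma pair_succ_r x y : pair x (S y) = S (pair (S x) y).
Proof. unfold pair. replace (x + S y) with (S x + y) by lia. lia. Qed.

Lemma pair_succ_0 y : pair (S y) 0 = S (pair 0 y).
Proof. unfold pair. rewrite !Nat.add_0_r, Nat.add_0_l, triangle_succ. lia. Qed.

Lemma pair_ge_r x y : y <= pair x y.
Proof. unfold pair. lia. Qed.

Lemma pair_ge_l x y : x <= pair x y.
Proof. unfold pair. destruct (x + y) eqn:E; [lia|]. rewrite triangle_succ. lia. Qed.

Lemma unpair_pair x y : unpair (pair x y) = (x, y).
Proof.
  remember (pair x y) as n eqn:E. revert x y E.
  induction n as [|n IH]; intros x y E.
  - pose proof (pair_ge_l x y). pose proof (pair_ge_r x y).
    replace x with 0 by lia. replace y with 0 by lia. reflexivity.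
  - destruct y as [|y]; [destruct x as [|x]|].
    + discriminate.
    + rewrite pair_succ_0 in E. injection E as E. simpl. now rewrite (IH _ _ E).
    + rewrite pair_succ_r in E. injection E as E. simpl. now rewrite (IH _ _ E).
Qed.

Lemma fst_unpair_pair x y : fst (unpair (pair x y)) = x.
Proof. now rewrite unpair_pair. Qed.

Lemma snd_unpair_pair x y : snd (unpair (pair x y)) = y.
Proof. now rewrite unpair_pair. Qed.

Lemma pair_unpair z : pair (fst (unpair z)) (snd (unpair z)) = z.
Proof.
  induction z as [|z IH]; [reflexivity|]. simpl.
  destruct (unpair z) as [[|x] y]; simpl in *.
  - rewrite pair_succ_0. lia.
  - rewrite pair_succ_r. lia.
Qed.

Lemma fst_unpair_le z : fst (unpair z) <= z.
Proof. rewrite <- (pair_unpair z) at 2. apply pair_ge_l. Qed.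

Lemma snd_unpair_le z : snd (unpair z) <= z.
Proof. rewrite <- (pair_unpair z) at 2. apply pair_ge_r. Qed.

Lemma eval_monotone k k' c x y :
  k <= k' -> eval k c x = Some y -> eval k' c x = Some y.
Proof.
  revert k' c x y. induction k as [|k IH]; intros k' c x y Hk H; [discriminate|].
  destruct k' as [|k']; [lia|]. apply le_S_n in Hk.
  destruct c; simpl in H |- *; try exact H.
  - destruct (eval k c1 x) eqn:E1; try discriminate.
    destruct (eval k c2 x) eqn:E2; try discriminate.
    now rewrite (IH _ _ _ _ Hk E1), (IH _ _ _ _ Hk E2).
  - destruct (eval k c2 x) eqn:E; try discriminate.
    rewrite (IH _ _ _ _ Hk E). eauto.
  - revert y H. induction (snd (unpair x)) as [|n IHn]; intros y H; [eauto|].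
    destruct (_ n) eqn:E in H; try discriminate. rewrite (IHn _ E). eauto.
  - revert H. generalize 0 as n. intros n.
    match goal with |- ?F k n = Some y -> ?G k' n = Some y =>
      enough (Hs : forall j j' n, j <= j' -> F j n = Some y -> G j' n = Some y)
        by (intro; eapply Hs; eassumption) end.
    induction j as [|j IHj]; intros [|j'] n' Hj H; try discriminate; [lia|].
    destruct (eval k c (pair x n')) as [[|v]|] eqn:E; try discriminate;
      rewrite (IH _ _ _ _ Hk E); [exact H|]. apply (IHj j'); [lia|exact H].
Qed.

Definition ev (c : code) (x y : nat) : Prop := exists k, eval k c x = Some y.

Definition dom (c : code) (x : nat) : Prop := exists y, ev c x y.

Lemma ev_det c x y y' : ev c x y -> ev c x y' -> y = y'.
Proof.
  intros [k H] [k' H'].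
  apply (eval_monotone _ (max k k')) in H, H'; [congruence|lia|lia].
Qed.

Lemma ev_intro k c x y : eval k c x = Some y -> ev c x y.
Proof. now exists k. Qed.

Lemma ev_zero x : ev CZero x 0. Proof. now exists 1. Qed.
Lemma ev_succ x : ev CSucc x (S x). Proof. now exists 1. Qed.
Lemma ev_id x : ev CId x x. Proof. now exists 1. Qed.
Lemma ev_fst x : ev CFst x (fst (unpair x)). Proof. now exists 1. Qed.
Lemma ev_snd x : ev CSnd x (snd (unpair x)). Proof. now exists 1. Qed.

Lemma ev_fst_pair a b : ev CFst (pair a b) a.
Proof. rewrite <- (fst_unpair_pair a b) at 2. apply ev_fst. Qed.

Lemma ev_snd_pair a b : ev CSnd (pair a b) b.
Proof. rewrite <- (snd_unpair_pair a b) at 2. apply ev_snd. Qed.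

Lemma ev_pair f g x a b : ev f x a -> ev g x b -> ev (CPair f g) x (pair a b).
Proof.
  intros [k1 H1] [k2 H2]. exists (S (max k1 k2)). simpl.
  now rewrite (eval_monotone _ _ _ _ _ (Nat.le_max_l k1 k2) H1),
              (eval_monotone _ _ _ _ _ (Nat.le_max_r k1 k2) H2).
Qed.

Lemma ev_comp f g x a b : ev g x a -> ev f a b -> ev (CComp f g) x b.
Proof.
  intros [k1 H1] [k2 H2]. exists (S (max k1 k2)). simpl.
  now rewrite (eval_monotone _ _ _ _ _ (Nat.le_max_l k1 k2) H1),
              (eval_monotone _ _ _ _ _ (Nat.le_max_r k1 k2) H2).
Qed.

Lemma ev_comp_inv f g x y : ev (CComp f g) x y -> exists a, ev g x a /\ ev f a y.
Proof.
  intros [[|k] H]; [discriminate|]. simpl in H.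
  destruct (eval k g x) eqn:E; try discriminate. eauto using ev_intro.
Qed.

Inductive prim_graph (f g : code) (a : nat) : nat -> nat -> Prop :=
| prim_graph_0 r : ev f a r -> prim_graph f g a 0 r
| prim_graph_S n r r' : prim_graph f g a n r -> ev g (pair (pair a n) r) r' ->
    prim_graph f g a (S n) r'.

Lemma ev_prim f g a n y : ev (CPrim f g) (pair a n) y <-> prim_graph f g a n y.
Proof.
  split.
  - intros [[|k] H]; [discriminate|]. simpl in H.
    rewrite fst_unpair_pair, snd_unpair_pair in H.
    revert y H. induction n as [|n IHn]; intros y H.
    + constructor. eauto using ev_intro.
    + destruct (_ n) eqn:E in H; try discriminate. econstructor; eauto using ev_intro.
  - intros H. enough (exists k, forall k', k <= k' ->
      (fix rec (n0 : nat) : option nat :=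
           match n0 with
           | 0 => eval k' f a
           | S n' => match rec n' with
                     | Some r => eval k' g (pair (pair a n') r)
                     | None => None
                     end
           end) n = Some y) as [k Hk].
    { exists (S k). simpl. rewrite fst_unpair_pair, snd_unpair_pair. apply Hk. lia. }
    induction H as [r [k Hk]|n r r' _ [k1 IH] [k2 H2]].
    + exists k. intros k' Hk'. eapply eval_monotone; eauto.
    + exists (max k1 k2). intros k' Hk'. rewrite (IH k' ltac:(lia)).
      eapply eval_monotone; [|eauto]. lia.
Qed.

Lemma dec_stable fu fu' n : n < fu -> n < fu' -> dec fu n = dec fu' n.
Proof.
  revert fu' n. induction fu as [|fu IH]; intros [|fu'] n H1 H2; try lia.
  destruct (Nat.eq_dec n 0) as [->|Hn]; [reflexivity|].
  pose proof (Nat.div_lt n 9 ltac:(lia) ltac:(lia)).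
  pose proof (fst_unpair_le (n / 9)). pose proof (snd_unpair_le (n / 9)).
  cbn [dec]. destruct (n mod 9) as [|[|[|[|[|[|[|[|]]]]]]]]; try reflexivity;
    f_equal; apply IH; lia.
Qed.

Lemma dec_decode fu n : n < fu -> dec fu n = decode n.
Proof. intros. apply dec_stable; lia. Qed.

Lemma mod9_add p r : r < 9 -> (9 * p + r) mod 9 = r.
Proof.
  intros. rewrite Nat.add_comm, Nat.mul_comm, Nat.Div0.mod_add. now apply Nat.mod_small.
Qed.

Lemma div9_add p r : r < 9 -> (9 * p + r) / 9 = p.
Proof.
  intros. rewrite Nat.add_comm, Nat.mul_comm, Nat.div_add, Nat.div_small; lia.
Qed.

Ltac decode_node r :=
  unfold decode at 1; cbn [dec];
  rewrite (mod9_add _ r ltac:(lia)), (div9_add _ r ltac:(lia)); cbn iota beta.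

Ltac decode_binary a b :=
  rewrite fst_unpair_pair, snd_unpair_pair;
  pose proof (pair_ge_l a b); pose proof (pair_ge_r a b); rewrite !dec_decode by lia.

Lemma decode_pair a b : decode (9 * pair a b + 5) = CPair (decode a) (decode b).
Proof. decode_node 5. now decode_binary a b. Qed.

Lemma decode_comp a b : decode (9 * pair a b + 6) = CComp (decode a) (decode b).
Proof. decode_node 6. now decode_binary a b. Qed.

Lemma decode_prim a b : decode (9 * pair a b + 7) = CPrim (decode a) (decode b).
Proof. decode_node 7. now decode_binary a b. Qed.

Lemma decode_mu a : decode (9 * a + 8) = CMu (decode a).
Proof. decode_node 8. now rewrite dec_decode by lia. Qed.

Fixpoint enc (c : code) : nat :=
  match c with
  | CZero => 0 | CSucc => 1 | CId => 2 | CFst => 3 | CSnd => 4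
  | CPair a b => 9 * pair (enc a) (enc b) + 5
  | CComp a b => 9 * pair (enc a) (enc b) + 6
  | CPrim a b => 9 * pair (enc a) (enc b) + 7
  | CMu a => 9 * enc a + 8
  end.

Lemma decode_enc c : decode (enc c) = c.
Proof.
  induction c; cbn [enc];
    rewrite ?decode_pair, ?decode_comp, ?decode_prim, ?decode_mu; congruence || reflexivity.
Qed.

Lemma psi_enc c x y : psi (enc c) x y <-> ev c x y.
Proof. unfold psi. now rewrite decode_enc. Qed.

(** * Primitive recursive codes *)

Fixpoint CConst (n : nat) : code :=
  match n with 0 => CZero | S m => CComp CSucc (CConst m) end.

Lemma ev_const n x : ev (CConst n) x n.
Proof. induction n; [apply ev_zero|]. eapply ev_comp; [apply IHn|apply ev_succ]. Qed.

Fixpoint prim_rec (F G : nat -> nat) (a n : nat) : nat :=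
  match n with 0 => F a | S n' => G (pair (pair a n') (prim_rec F G a n')) end.

Lemma ev_prim_rec f g F G a n :
  (forall z, ev f z (F z)) -> (forall z, ev g z (G z)) ->
  ev (CPrim f g) (pair a n) (prim_rec F G a n).
Proof. intros Hf Hg. apply ev_prim. induction n; simpl; econstructor; eauto. Qed.

Definition CIter (g : code) : code := CPrim CId (CComp g CSnd).

Lemma ev_iter g G a n : (forall z, ev g z (G z)) -> ev (CIter g) (pair a n) (Nat.iter n G a).
Proof.
  intros Hg. apply ev_prim. induction n; simpl; econstructor; eauto using ev_id.
  eapply ev_comp; [apply ev_snd_pair|apply Hg].
Qed.

Ltac ev_step := match goal with
 | |- ev (CComp _ _) _ _ => eapply ev_comp
 | |- ev (CPair _ _) _ _ => eapply ev_pair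
 | |- ev CFst (pair _ _) _ => apply ev_fst_pair
 | |- ev CSnd (pair _ _) _ => apply ev_snd_pair
 | |- ev CFst _ _ => apply ev_fst
 | |- ev CSnd _ _ => apply ev_snd
 | |- ev CId _ _ => apply ev_id
 | |- ev CZero _ _ => apply ev_zero
 | |- ev CSucc _ _ => apply ev_succ
 | |- ev (CConst _) _ _ => apply ev_const
 end.

Ltac ev_steps := repeat ev_step.

Definition CPred : code := CComp (CPrim CZero (CComp CSnd CFst)) (CPair CZero CId).

Lemma ev_pred x : ev CPred x (pred x).
Proof.
  unfold CPred. ev_steps.
  replace (pred x) with (prim_rec (fun _ => 0) (fun z => snd (unpair (fst (unpair z)))) 0 x).
  - apply ev_prim_rec; intros; ev_steps.
  - destruct x; simpl; now rewrite ?fst_unpair_pair, ?snd_unpair_pair.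
Qed.

Definition CAdd : code := CIter CSucc.

Lemma ev_add u v : ev CAdd (pair u v) (u + v).
Proof.
  replace (u + v) with (Nat.iter v S u); [apply ev_iter, ev_succ|].
  induction v; simpl; lia.
Qed.

Definition CSub : code := CIter CPred.

Lemma ev_sub u v : ev CSub (pair u v) (u - v).
Proof.
  replace (u - v) with (Nat.iter v pred u); [apply ev_iter, ev_pred|].
  induction v; simpl; lia.
Qed.

Definition CMul : code :=
  CComp CSnd (CComp (CIter (CPair CFst CAdd)) (CPair (CPair CFst CZero) CSnd)).

Lemma ev_mul u v : ev CMul (pair u v) (u * v).
Proof.
  set (step z := pair (fst (unpair z)) (fst (unpair z) + snd (unpair z))).
  assert (Hstep : forall w, Nat.iter w step (pair u 0) = pair u (u * w)).
  { induction w; simpl; [f_equal; lia|]. rewrite IHw. unfold step.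
    rewrite fst_unpair_pair, snd_unpair_pair. f_equal. lia. }
  unfold CMul. ev_steps. apply (ev_iter _ step).
  - intros z. unfold step. rewrite <- (pair_unpair z) at 1. ev_steps. apply ev_add.
  - rewrite Hstep. ev_step.
Qed.

Definition CIsZero : code := CComp (CPrim (CConst 1) CZero) (CPair CZero CId).

Lemma ev_is_zero x : ev CIsZero x (Nat.b2n (x =? 0)).
Proof.
  unfold CIsZero. ev_steps. replace (Nat.b2n (x =? 0)) with (prim_rec (fun _ => 1) (fun _ => 0) 0 x).
  - apply ev_prim_rec; intros; ev_steps.
  - now destruct x.
Qed.

Definition CNonZero : code := CComp CIsZero CIsZero.

Lemma ev_non_zero x : ev CNonZero x (Nat.b2n (negb (x =? 0))).
Proof.
  eapply ev_comp; [apply ev_is_zero|]. destruct x; apply ev_is_zero.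
Qed.

Definition CEqb : code :=
  CComp CIsZero (CComp CAdd (CPair CSub (CComp CSub (CPair CSnd CFst)))).

Lemma ev_eqb u v : ev CEqb (pair u v) (Nat.b2n (u =? v)).
Proof.
  unfold CEqb. ev_steps; try apply ev_sub; [apply ev_add|].
  replace (u =? v) with (u - v + (v - u) =? 0); [apply ev_is_zero|].
  apply eq_true_iff_eq. rewrite !Nat.eqb_eq. lia.
Qed.

Definition CIf (cb cu cv : code) : code :=
  CComp CAdd (CPair (CComp CMul (CPair cb cu)) (CComp CMul (CPair (CComp CIsZero cb) cv))).

Lemma ev_if cb cu cv x (b : bool) u v :
  ev cb x (Nat.b2n b) -> ev cu x u -> ev cv x v -> ev (CIf cb cu cv) x (if b then u else v).
Proof.
  intros Hb Hu Hv. replace (if b then u else v) with (Nat.b2n b * u + Nat.b2n (Nat.b2n b =? 0) * v)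
    by (destruct b; simpl; lia).
  unfold CIf. ev_steps; eauto using ev_mul, ev_is_zero, ev_add.
Qed.

Definition lhd (z : nat) : nat := fst (unpair (pred z)).
Definition ltl (z : nat) : nat := snd (unpair (pred z)).
Definition lnth (n l : nat) : nat := lhd (Nat.iter n ltl l).

Definition CHd : code := CComp CFst CPred.
Definition CTl : code := CComp CSnd CPred.
Definition CNth : code := CComp CHd (CComp (CIter CTl) (CPair CSnd CFst)).

Lemma ev_hd z : ev CHd z (lhd z).
Proof. eapply ev_comp; [apply ev_pred|apply ev_fst]. Qed.

Lemma ev_tl z : ev CTl z (ltl z).
Proof. eapply ev_comp; [apply ev_pred|apply ev_snd]. Qed.

Lemma ev_nth n l : ev CNth (pair n l) (lnth n l).
Proof. unfold CNth. ev_steps; [apply ev_iter, ev_tl|apply ev_hd]. Qed.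

Lemma lhd_cons a s : lhd (enc_list (a :: s)) = a.
Proof. apply fst_unpair_pair. Qed.

Lemma ltl_cons a s : ltl (enc_list (a :: s)) = enc_list s.
Proof. apply snd_unpair_pair. Qed.

Lemma lnth_enc_list s n : lnth n (enc_list s) = nth n s 0.
Proof.
  unfold lnth. revert n. induction s as [|a s IH]; intros n.
  - change (enc_list []) with 0.
    enough (Nat.iter n ltl 0 = 0) as -> by now destruct n.
    induction n; simpl; [|rewrite IHn]; reflexivity.
  - destruct n; [apply lhd_cons|]. now rewrite Nat.iter_succ_r, ltl_cons.
Qed.

Lemma length_le_enc_list s : length s <= enc_list s.
Proof. induction s; simpl; [lia|]. pose proof (pair_ge_r a (enc_list s)). lia. Qed.

(** [CLoop st] runs [l] rounds on [pair l acc], more than the length of the list, so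
    the step must ignore the padding [lhd 0 = 0]. *)
Definition CLoop (st : code) : code :=
  CComp CSnd (CComp (CIter (CPair (CComp CTl CFst) (CComp st (CPair (CComp CHd CFst) CSnd))))
                    (CPair CId CFst)).

Lemma ev_loop st (stf : nat -> nat -> nat) s acc :
  (forall e a, ev st (pair e a) (stf e a)) -> (forall a, stf 0 a = a) ->
  ev (CLoop st) (pair (enc_list s) acc) (fold_left (fun a e => stf e a) s acc).
Proof.
  intros Hst Hpad.
  set (step z := pair (ltl (fst (unpair z))) (stf (lhd (fst (unpair z))) (snd (unpair z)))).
  assert (Hiter : forall s acc n, length s <= n ->
    Nat.iter n step (pair (enc_list s) acc) = pair 0 (fold_left (fun a e => stf e a) s acc)).
  { clear acc. intros s'. induction s' as [|e s' IH]; intros acc n Hn.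
    - change (enc_list []) with 0 in *. induction n; [reflexivity|].
      simpl. rewrite IHn by (simpl; lia). unfold step.
      now rewrite fst_unpair_pair, snd_unpair_pair, Hpad.
    - destruct n as [|n]; [simpl in Hn; lia|]. rewrite Nat.iter_succ_r. unfold step at 2.
      rewrite fst_unpair_pair, snd_unpair_pair, lhd_cons, ltl_cons. apply IH. simpl in Hn; lia. }
  unfold CLoop. ev_steps.
  - apply (ev_iter _ step). intros z. unfold step. ev_steps; auto using ev_tl, ev_hd.
  - rewrite Hiter by apply length_le_enc_list. ev_step.
Qed.

Fixpoint count_below (e l n : nat) : nat :=
  match n with 0 => 0 | S n' => count_below e l n' + Nat.b2n (lnth n' l =? e) end.

Definition CCount : code :=
  CComp (CPrim CZero (CComp CAdd (CPair CSnd (CComp CEqb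
          (CPair (CComp CNth (CPair (CComp CSnd CFst) (CComp CSnd (CComp CFst CFst))))
                 (CComp CFst (CComp CFst CFst)))))))
        (CPair CId CSnd).

Lemma ev_count e l : ev CCount (pair e l) (count_below e l l).
Proof.
  unfold CCount. ev_steps.
  replace (count_below e l l) with (prim_rec (fun _ => 0) (fun z =>
    snd (unpair z) + Nat.b2n (lnth (snd (unpair (fst (unpair z))))
                                   (snd (unpair (fst (unpair (fst (unpair z)))))) =?
                              fst (unpair (fst (unpair (fst (unpair z))))))) (pair e l) l).
  - apply ev_prim_rec; intros; ev_steps; auto using ev_nth, ev_eqb, ev_add.
  - generalize l at 2 4. intros n. induction n; cbn [prim_rec count_below]; [reflexivity|].
    now rewrite IHn, !fst_unpair_pair, !snd_unpair_pair.
Qed.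

Lemma count_below_pos e l n : 0 < count_below e l n <-> exists i, i < n /\ lnth i l = e.
Proof.
  induction n as [|n IH]; simpl; [split; [lia|intros (i & H & _); lia]|].
  destruct (Nat.eqb_spec (lnth n l) e); simpl.
  - split; [intros _; exists n; auto|lia].
  - rewrite Nat.add_0_r, IH. split; intros (i & Hi & Hl); exists i; split; auto.
    assert (i <> n) by congruence. lia.
Qed.

Lemma count_pos_iff_In e s : e <> 0 -> 0 < count_below e (enc_list s) (enc_list s) <-> In e s.
Proof.
  intros He. rewrite count_below_pos. split.
  - intros (i & Hi & Hl). rewrite lnth_enc_list in Hl.
    destruct (Nat.lt_ge_cases i (length s)).
    + rewrite <- Hl. now apply nth_In.
    + rewrite nth_overflow in Hl; [congruence|auto].
  - intros H. destruct (In_nth s e 0 H) as (i & Hi & Hn). exists i.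
    pose proof (length_le_enc_list s). rewrite lnth_enc_list. split; [lia|auto].
Qed.

Definition add_new (a : list nat) (e : nat) : list nat :=
  if negb (e =? 0) && negb (existsb (Nat.eqb e) a) then e :: a else a.

Lemma existsb_eqb_In e a : existsb (Nat.eqb e) a = true <-> In e a.
Proof.
  rewrite existsb_exists. split.
  - intros (x & H & E). now apply Nat.eqb_eq in E as ->.
  - intros H. exists e. now rewrite Nat.eqb_refl.
Qed.

Lemma b2n_andb a b : Nat.b2n (a && b) = Nat.b2n a * Nat.b2n b.
Proof. now destruct a, b. Qed.

Definition add_new_step (e a : nat) : nat :=
  if negb (e =? 0) && (count_below e a a =? 0) then S (pair e a) else a.

Definition CAddNew : code :=
  CIf (CComp CMul (CPair (CComp CNonZero CFst) (CComp CIsZero CCount))) CSucc CSnd.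

Lemma ev_add_new e a : ev CAddNew (pair e a) (add_new_step e a).
Proof.
  unfold CAddNew, add_new_step. apply ev_if; ev_steps;
    [apply ev_non_zero|apply ev_count|apply ev_is_zero|rewrite b2n_andb; apply ev_mul].
Qed.

Lemma add_new_step_enc e a : add_new_step e (enc_list a) = enc_list (add_new a e).
Proof.
  unfold add_new_step, add_new. destruct (Nat.eqb_spec e 0) as [|He]; [reflexivity|].
  pose proof (count_pos_iff_In e a He) as Hc. rewrite <- existsb_eqb_In in Hc.
  destruct (existsb (Nat.eqb e) a), (count_below e (enc_list a) (enc_list a));
    simpl in *; intuition lia.
Qed.

Definition cons_step (e a : nat) : nat := if negb (e =? 0) then S (pair e a) else a.

Definition CCons : code := CIf (CComp CNonZero CFst) CSucc CSnd.

Lemma ev_cons e a : ev CCons (pair e a) (cons_step e a).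
Proof. unfold CCons, cons_step. apply ev_if; ev_steps. apply ev_non_zero. Qed.

Lemma fold_left_enc_list (stf : nat -> nat -> nat) (lf : list nat -> nat -> list nat) s a :
  (forall e a, stf e (enc_list a) = enc_list (lf a e)) ->
  fold_left (fun a e => stf e a) s (enc_list a) = enc_list (fold_left lf s a).
Proof. intros H. revert a. induction s; intros; simpl; [|rewrite H]; auto. Qed.

Lemma add_new_no_zero s a : ~ In 0 a -> ~ In 0 (fold_left add_new s a).
Proof.
  revert a. induction s as [|e s IH]; intros a Ha; simpl; auto.
  apply IH. unfold add_new. destruct (Nat.eqb_spec e 0); simpl; [auto|].
  destruct (existsb _ _); simpl; intuition.
Qed.

Definition CDistinct : code :=
  CComp (CLoop CCons) (CPair (CComp (CLoop CAddNew) (CPair CId CZero)) CZero).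

Lemma ev_distinct s : ev CDistinct (enc_list s) (enc_list (rev (fold_left add_new s []))).
Proof.
  assert (Hrev : forall l a, ~ In 0 l ->
    fold_left (fun a e => cons_step e a) l (enc_list a) = enc_list (rev l ++ a)).
  { induction l as [|e l IH]; intros a Hl; [reflexivity|]. simpl.
    replace (cons_step e (enc_list a)) with (enc_list (e :: a))
      by (destruct e; [exfalso; apply Hl; left|]; auto).
    rewrite IH by (intros H; apply Hl; now right). now rewrite <- app_assoc. }
  unfold CDistinct. ev_steps.
  - change 0 with (enc_list []). apply ev_loop; [apply ev_add_new|reflexivity].
  - rewrite (fold_left_enc_list _ add_new) by apply add_new_step_enc.
    change 0 with (enc_list []). rewrite <- (app_nil_r (rev _)), <- Hrev.
    + apply ev_loop; [apply ev_cons|reflexivity].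
    + now apply add_new_no_zero.
Qed.

Definition CHalfOdd : code :=
  CComp (CIter (CPair CAdd (CComp CIsZero CSnd))) (CPair (CPair CZero CZero) CId).

Lemma ev_half_odd z : ev CHalfOdd z (pair (Nat.div2 z) (Nat.b2n (Nat.odd z))).
Proof.
  set (step w := pair (fst (unpair w) + snd (unpair w)) (Nat.b2n (snd (unpair w) =? 0))).
  replace (pair (Nat.div2 z) _) with (Nat.iter z step (pair 0 0)).
  - unfold CHalfOdd. ev_steps. apply ev_iter. intros w. unfold step.
    rewrite <- (pair_unpair w) at 1. ev_steps; [apply ev_add|apply ev_is_zero].
  - induction z as [|z IH]; [reflexivity|]. simpl. rewrite IH. unfold step.
    rewrite fst_unpair_pair, snd_unpair_pair.
    pose proof (Nat.div2_odd z) as H1. pose proof (Nat.div2_odd (S z)) as H2.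
    rewrite Nat.odd_succ, <- Nat.negb_odd in *.
    destruct (Nat.odd z); simpl in *; f_equal; lia.
Qed.

Definition CBit : code := CComp CSnd (CComp CHalfOdd (CIter (CComp CFst CHalfOdd))).

Lemma ev_bit d y : ev CBit (pair d y) (Nat.b2n (Nat.testbit d y)).
Proof.
  assert (Hhalf : forall z, ev (CComp CFst CHalfOdd) z (Nat.div2 z)).
  { intros z. eapply ev_comp; [apply ev_half_odd|apply ev_fst_pair]. }
  unfold CBit. ev_steps; [apply ev_iter, Hhalf|apply ev_half_odd|].
  replace (Nat.testbit d y) with (Nat.odd (Nat.iter y Nat.div2 d)); [apply ev_snd_pair|].
  revert d. induction y as [|y IH]; intros d.
  - now rewrite <- Nat.bit0_odd.
  - rewrite Nat.iter_succ_r, IH. apply Nat.testbit_div2.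
Qed.

Fixpoint bit_list (d n : nat) : list nat :=
  match n with 0 => [] | S y => if Nat.testbit d y then S y :: bit_list d y else bit_list d y end.

Fixpoint popcount_below (d n : nat) : nat :=
  match n with 0 => 0 | S y => popcount_below d y + Nat.b2n (Nat.testbit d y) end.

Definition CBits : code :=
  CComp (CPrim CZero (CIf (CComp CBit CFst) (CComp CSucc (CPair (CComp CSucc (CComp CSnd CFst)) CSnd))
                          CSnd))
        (CPair CId CId).

Definition CPopcount : code :=
  CComp (CPrim CZero (CComp CAdd (CPair CSnd (CComp CBit CFst)))) (CPair CId CId).

Lemma ev_bits d : ev CBits d (enc_list (bit_list d d)).
Proof.
  unfold CBits. ev_steps.
  replace (enc_list (bit_list d d)) with (prim_rec (fun _ => 0) (fun z =>
    if Nat.testbit (fst (unpair (fst (unpair z)))) (snd (unpair (fst (unpair z))))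
    then S (pair (S (snd (unpair (fst (unpair z))))) (snd (unpair z))) else snd (unpair z)) d d).
  - apply ev_prim_rec; [intros; ev_step|intros z; apply ev_if; ev_steps].
    rewrite <- (pair_unpair (fst (unpair z))) at 1. apply ev_bit.
  - generalize d at 2 4. intros n. induction n; cbn [prim_rec bit_list enc_list]; [reflexivity|].
    rewrite IHn, !fst_unpair_pair, !snd_unpair_pair. now destruct (Nat.testbit d n).
Qed.

Lemma ev_popcount d : ev CPopcount d (popcount_below d d).
Proof.
  unfold CPopcount. ev_steps.
  replace (popcount_below d d) with (prim_rec (fun _ => 0) (fun z =>
    snd (unpair z) + Nat.b2n (Nat.testbit (fst (unpair (fst (unpair z))))
                                          (snd (unpair (fst (unpair z)))))) d d).
  - apply ev_prim_rec; [intros; ev_step|intros z; ev_steps; [|apply ev_add]].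
    rewrite <- (pair_unpair (fst (unpair z))) at 1. apply ev_bit.
  - generalize d at 2 4. intros n. induction n; cbn [prim_rec popcount_below]; [reflexivity|].
    now rewrite IHn, !fst_unpair_pair, !snd_unpair_pair.
Qed.

Lemma In_bit_list d n x : In x (bit_list d n) <-> exists y, x = S y /\ y < n /\ Nat.testbit d y = true.
Proof.
  induction n as [|n IH]; simpl; [split; [tauto|intros (y & _ & H & _); lia]|].
  destruct (Nat.testbit d n) eqn:E; simpl; rewrite IH; split.
  - intros [<-|(y & -> & H1 & H2)]; [exists n|exists y]; auto.
  - intros (y & -> & H1 & H2). destruct (Nat.eq_dec y n) as [->|]; [now left|].
    right. exists y. repeat split; auto; lia.
  - intros (y & -> & H1 & H2). exists y; auto.
  - intros (y & -> & H1 & H2). exists y. repeat split; auto.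
    destruct (Nat.eq_dec y n) as [->|]; [congruence|lia].
Qed.

Lemma testbit_lt d y : Nat.testbit d y = true -> y < d.
Proof.
  intros H. destruct (Nat.lt_ge_cases y d) as [|Hge]; auto.
  rewrite Nat.testbit_eqb, Nat.div_small in H; [discriminate|].
  apply (Nat.lt_le_trans _ (2 ^ d)); [apply Nat.pow_gt_lin_r; lia|].
  apply Nat.pow_le_mono_r; lia.
Qed.

Lemma In_succ_bit_list d x : In (S x) (bit_list d d) <-> Nat.testbit d x = true.
Proof.
  rewrite In_bit_list. split.
  - now intros (y & [= ->] & _ & H).
  - intros H. exists x. repeat split; auto using testbit_lt.
Qed.

Lemma zero_notin_bit_list d n : ~ In 0 (bit_list d n).
Proof. rewrite In_bit_list. now intros (y & E & _). Qed.

Lemma length_bit_list d n : length (bit_list d n) = popcount_below d n.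
Proof. induction n; simpl; [|destruct (Nat.testbit d n); simpl]; lia. Qed.

Lemma NoDup_bit_list d n : NoDup (bit_list d n).
Proof.
  induction n; simpl; [constructor|]. destruct (Nat.testbit d n); auto.
  constructor; auto. rewrite In_bit_list. intros (y & [= ->] & H & _). lia.
Qed.

Inductive template : Type :=
| TZero | TSucc | TId | TFst | TSnd
| TPair (a b : template) | TComp (a b : template) | TPrim (a b : template) | TMu (a : template)
| THole1 | THole2.

Fixpoint fill (t : template) (c1 c2 : code) : code :=
  match t with
  | TZero => CZero | TSucc => CSucc | TId => CId | TFst => CFst | TSnd => CSnd
  | TPair a b => CPair (fill a c1 c2) (fill b c1 c2)
  | TComp a b => CComp (fill a c1 c2) (fill b c1 c2)
  | TPrim a b => CPrim (fill a c1 c2) (fill b c1 c2)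
  | TMu a => CMu (fill a c1 c2)
  | THole1 => c1 | THole2 => c2
  end.

Fixpoint template_of (c : code) : template :=
  match c with
  | CZero => TZero | CSucc => TSucc | CId => TId | CFst => TFst | CSnd => TSnd
  | CPair a b => TPair (template_of a) (template_of b)
  | CComp a b => TComp (template_of a) (template_of b)
  | CPrim a b => TPrim (template_of a) (template_of b)
  | CMu a => TMu (template_of a)
  end.

Fixpoint fill_number (t : template) (n1 n2 : nat) : nat :=
  match t with
  | TZero => 0 | TSucc => 1 | TId => 2 | TFst => 3 | TSnd => 4
  | TPair a b => 9 * pair (fill_number a n1 n2) (fill_number b n1 n2) + 5
  | TComp a b => 9 * pair (fill_number a n1 n2) (fill_number b n1 n2) + 6
  | TPrim a b => 9 * pair (fill_number a n1 n2) (fill_number b n1 n2) + 7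
  | TMu a => 9 * fill_number a n1 n2 + 8
  | THole1 => n1 | THole2 => n2
  end.

Lemma decode_fill_number t n1 n2 : decode (fill_number t n1 n2) = fill t (decode n1) (decode n2).
Proof.
  induction t; cbn [fill_number fill];
    rewrite ?decode_pair, ?decode_comp, ?decode_prim, ?decode_mu; congruence || reflexivity.
Qed.

Definition CNum (r : nat) : code := CComp CAdd (CPair (CComp CMul (CPair (CConst 9) CId)) (CConst r)).

Lemma ev_num r z : ev (CNum r) z (9 * z + r).
Proof. unfold CNum. ev_steps; [apply ev_mul|apply ev_add]. Qed.

Fixpoint CFill (t : template) : code :=
  match t with
  | TZero => CConst 0 | TSucc => CConst 1 | TId => CConst 2 | TFst => CConst 3 | TSnd => CConst 4
  | TPair a b => CComp (CNum 5) (CPair (CFill a) (CFill b))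
  | TComp a b => CComp (CNum 6) (CPair (CFill a) (CFill b))
  | TPrim a b => CComp (CNum 7) (CPair (CFill a) (CFill b))
  | TMu a => CComp (CNum 8) (CFill a)
  | THole1 => CFst | THole2 => CSnd
  end.

Lemma ev_fill t n1 n2 : ev (CFill t) (pair n1 n2) (fill_number t n1 n2).
Proof.
  induction t; cbn [CFill fill_number]; ev_steps; eauto using ev_num.
Qed.

Definition const_number (v : nat) : nat := Nat.iter v (fun r => 9 * pair 1 r + 6) 0.

Definition CConstNumber : code :=
  CComp (CIter (CComp (CNum 6) (CPair (CConst 1) CId))) (CPair CZero CId).

Lemma ev_const_number v : ev CConstNumber v (const_number v).
Proof. unfold CConstNumber. ev_steps. apply ev_iter. intros z. ev_steps. apply ev_num. Qed.

Lemma decode_const_number v : decode (const_number v) = CConst v.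
Proof.
  induction v; [reflexivity|].
  change (decode (9 * pair 1 (const_number v) + 6) = CComp CSucc (CConst v)).
  now rewrite decode_comp, IHv.
Qed.

Lemma dom_comp f g x : dom (CComp f g) x <-> exists a, ev g x a /\ dom f a.
Proof.
  split.
  - intros [y H]. apply ev_comp_inv in H as (a & H1 & H2). exists a. split; [|exists y]; auto.
  - intros (a & H1 & [y H2]). exists y. eapply ev_comp; eauto.
Qed.

Lemma dom_comp_ev f g x a : ev g x a -> dom (CComp f g) x <-> dom f a.
Proof.
  intros Ha. rewrite dom_comp. split.
  - intros (a' & H1 & H2). now rewrite (ev_det _ _ _ _ Ha H1).
  - eauto.
Qed.

Lemma dom_prim f g a n (P : nat -> Prop) :
  (forall i r, dom g (pair (pair a i) r) <-> P i) ->
  dom (CPrim f g) (pair a n) <-> dom f a /\ forall i, i < n -> P i.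
Proof.
  intros HP. unfold dom at 1. setoid_rewrite ev_prim.
  induction n as [|n IH]; split.
  - intros [y H]. inversion H; subst. split; [now exists y|lia].
  - intros [[y H] _]. exists y. now constructor.
  - intros [y H]. inversion H as [|? r ? Hr Hg]; subst.
    destruct (proj1 IH (ex_intro _ r Hr)) as [Hf Hi]. split; auto.
    intros i Hi'. destruct (Nat.eq_dec i n) as [->|]; [apply (HP n r); now exists y|].
    apply Hi; lia.
  - intros [Hf Hi]. destruct (proj2 IH (conj Hf (fun i H => Hi i (Nat.lt_lt_succ_r _ _ H))))
      as [r Hr].
    destruct (proj2 (HP n r) (Hi n ltac:(lia))) as [y Hy]. exists y. econstructor; eauto.
Qed.

Definition CGuard (d : code) : code := CPrim CZero (CComp d (CComp CFst CFst)).

Lemma dom_guard_0 d a : dom (CGuard d) (pair a 0).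
Proof. exists 0. apply ev_prim. constructor. apply ev_zero. Qed.

Lemma dom_guard_1 d a : dom (CGuard d) (pair a 1) <-> dom d a.
Proof.
  unfold CGuard. rewrite (dom_prim _ _ a 1 (fun _ => dom d a)).
  - split; [intros [_ H]; apply (H 0); lia|]. split; [exists 0; apply ev_zero|auto].
  - intros i r. rewrite (dom_comp_ev _ _ _ a); [reflexivity|ev_steps].
Qed.

(** * An index for [s ∪ (W_e if s ⊆ W_e)] *)

Definition CItem : code := CComp CNth (CPair (CComp CSnd CFst) (CComp CSnd (CComp CFst CFst))).
Definition CCheckStep (c : code) : code :=
  CComp (CGuard (CComp c CPred)) (CPair CItem (CComp CNonZero CItem)).
Definition CCheck (c : code) : code :=
  CComp (CPrim (CComp c CFst) (CCheckStep c)) (CPair CId CSnd).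
Definition CNotMember : code := CComp CIsZero (CComp CCount (CPair (CComp CSucc CFst) CSnd)).
Definition CBody (c : code) : code := CComp (CGuard (CCheck c)) (CPair CId CNotMember).
Definition CGuarded (c k : code) : code := CComp (CBody c) (CPair CId k).

Definition TGuard (t : template) : template :=
  TPrim TZero (TComp t (template_of (CComp CFst CFst))).
Definition guarded_template : template :=
  TComp (TComp (TGuard (TComp (TPrim (TComp THole1 TFst)
                                     (TComp (TGuard (TComp THole1 (template_of CPred)))
                                            (template_of (CPair CItem (CComp CNonZero CItem)))))
                              (template_of (CPair CId CSnd))))
               (TPair TId (template_of CNotMember)))
        (TPair TId THole2).

Lemma fill_guarded_template c k : fill guarded_template c k = CGuarded c k.
Proof. reflexivity. Qed.

Lemma dom_check_step c x l i r :
  dom (CCheckStep c) (pair (pair (pair x l) i) r) <->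
  (lnth i l <> 0 -> dom c (pred (lnth i l))).
Proof.
  assert (Hitem : ev CItem (pair (pair (pair x l) i) r) (lnth i l))
    by (unfold CItem; ev_steps; apply ev_nth).
  unfold CCheckStep.
  rewrite (dom_comp_ev _ _ _ (pair (lnth i l) (Nat.b2n (negb (lnth i l =? 0)))))
    by (ev_steps; [apply Hitem|apply Hitem|apply ev_non_zero]).
  destruct (lnth i l) as [|e]; simpl.
  - split; [intros _ H; now contradiction H|intros _; apply dom_guard_0].
  - rewrite dom_guard_1, (dom_comp_ev _ _ _ _ (ev_pred (S e))). simpl. split; auto.
Qed.

Lemma dom_check c x l :
  dom (CCheck c) (pair x l) <->
  dom c x /\ forall i, i < l -> lnth i l <> 0 -> dom c (pred (lnth i l)).
Proof.
  unfold CCheck. rewrite (dom_comp_ev _ _ _ (pair (pair x l) l)) by ev_steps.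
  rewrite (dom_prim _ _ _ _ _ (dom_check_step c x l)).
  now rewrite (dom_comp_ev _ _ _ _ (ev_fst_pair x l)).
Qed.

Lemma dom_body c x l :
  dom (CBody c) (pair x l) <-> 0 < count_below (S x) l l \/ dom (CCheck c) (pair x l).
Proof.
  unfold CBody.
  rewrite (dom_comp_ev _ _ _ (pair (pair x l) (Nat.b2n (count_below (S x) l l =? 0))))
    by (unfold CNotMember; ev_steps; [apply ev_count|apply ev_is_zero]).
  destruct (count_below (S x) l l); simpl.
  - rewrite dom_guard_1. intuition lia.
  - split; [intros _; left; lia|intros _; apply dom_guard_0].
Qed.

Lemma dom_guarded c s x :
  dom (CGuarded c (CConst (enc_list s))) x <->
  In (S x) s \/ (dom c x /\ forall y, In (S y) s -> dom c y).
Proof.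
  unfold CGuarded. rewrite (dom_comp_ev _ _ _ (pair x (enc_list s))) by ev_steps.
  rewrite dom_body, dom_check, count_pos_iff_In by lia.
  apply or_iff_compat_l, and_iff_compat_l. split.
  - intros H y Hy. destruct (In_nth s (S y) 0 Hy) as (i & Hi & Hn).
    pose proof (length_le_enc_list s).
    specialize (H i). rewrite lnth_enc_list, Hn in H. apply H; lia.
  - intros H i _. rewrite lnth_enc_list. intros Hn.
    destruct (Nat.lt_ge_cases i (length s)).
    + apply H. replace (S (pred (nth i s 0))) with (nth i s 0) by lia. now apply nth_In.
    + now rewrite nth_overflow in Hn.
Qed.

Definition guarded_index (f g : nat -> nat) (e l : nat) : nat :=
  g (fill_number guarded_template (f e) (const_number l)).

Lemma W_guarded_index phi f g e s z :
  (forall e x y, phi e x y <-> psi (f e) x y) ->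
  (forall e x y, psi e x y <-> phi (g e) x y) ->
  W phi (guarded_index f g e (enc_list s)) z <->
  In (S z) s \/ (W phi e z /\ forall y, In (S y) s -> W phi e y).
Proof.
  intros Hf Hg.
  assert (HW : forall u x, W phi u x <-> dom (decode (f u)) x).
  { intros u x. unfold W, dom, ev. now setoid_rewrite Hf. }
  assert (Hidx : W phi (guarded_index f g e (enc_list s)) z <->
                 dom (CGuarded (decode (f e)) (CConst (enc_list s))) z).
  { unfold guarded_index, W, dom, ev. setoid_rewrite <- Hg. unfold psi.
    now rewrite decode_fill_number, decode_const_number, fill_guarded_template. }
  rewrite Hidx, dom_guarded, !HW. setoid_rewrite HW. reflexivity.
Qed.

Lemma testbit_pow2_add x r y :
  Nat.testbit r x = false -> Nat.testbit (2 ^ x + r) y = (x =? y) || Nat.testbit r y.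
Proof.
  intros Hr. assert (Hland : Nat.land (2 ^ x) r = 0).
  { apply Nat.bits_inj_0. intros n. rewrite Nat.land_spec, Nat.pow2_bits_eqb.
    destruct (Nat.eqb_spec x n) as [<-|]; [now rewrite Hr|reflexivity]. }
  rewrite Nat.add_nocarry_lxor, Nat.lxor_spec, Nat.pow2_bits_eqb by exact Hland.
  destruct (Nat.eqb_spec x y) as [<-|]; [now rewrite Hr|now destruct (Nat.testbit r y)].
Qed.

Lemma undup_nat_spec s : NoDup (undup_nat s) /\ forall x, In x (undup_nat s) <-> In x s.
Proof.
  induction s as [|a s [Hnd Hin]]; simpl; [split; [constructor|tauto]|].
  destruct (existsb (Nat.eqb a) s) eqn:E.
  - apply existsb_eqb_In in E. split; auto. intros x. rewrite Hin. intuition congruence.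
  - split.
    + constructor; auto. rewrite Hin, <- existsb_eqb_In, E. discriminate.
    + intros x. simpl. now rewrite Hin.
Qed.

Lemma testbit_sum_pow2 u y :
  NoDup u -> Nat.testbit (fold_right (fun x acc => 2 ^ x + acc) 0 u) y = true <-> In y u.
Proof.
  intros Hnd. revert y. induction Hnd as [|a u Ha Hnd IH]; intros y; simpl.
  - rewrite Nat.bits_0. intuition discriminate.
  - rewrite testbit_pow2_add, orb_true_iff, Nat.eqb_eq, IH; [tauto|].
    destruct (Nat.testbit _ a) eqn:E; [|reflexivity]. now apply IH in E.
Qed.

Lemma testbit_enc_set s y : Nat.testbit (enc_set s) y = true <-> In y s.
Proof.
  destruct (undup_nat_spec s) as [Hnd Hin]. unfold enc_set.
  now rewrite testbit_sum_pow2, Hin.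
Qed.

Lemma enc_set_ext s s' : (forall y, In y s <-> In y s') -> enc_set s = enc_set s'.
Proof.
  intros H. apply Nat.bits_inj. intros y. apply eq_true_iff_eq.
  now rewrite !testbit_enc_set.
Qed.

Lemma In_content_list T i y : In y (content_list T i) <-> content_prefix T i y.
Proof.
  unfold content_list, prefix, content_prefix. rewrite in_flat_map. split.
  - intros (o & Ho & Hy). apply in_map_iff in Ho as (j & <- & Hj). apply in_seq in Hj.
    destruct (T j) eqn:E; simpl in Hy; [destruct Hy as [<-|[]]|contradiction].
    exists j. split; [lia|auto].
  - intros (j & Hj & E). exists (Some y). split; [|now left].
    apply in_map_iff. exists j. split; [auto|apply in_seq; lia].
Qed.

Lemma In_succ_bit_list_content T k z :
  In (S z) (bit_list (enc_set (content_list T k)) (enc_set (content_list T k))) <->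
  content_prefix T k z.
Proof. now rewrite In_succ_bit_list, testbit_enc_set, In_content_list. Qed.

(** * The canonical text *)

Lemma content_prefix_mono T k k' z : k <= k' -> content_prefix T k z -> content_prefix T k' z.
Proof. intros H (i & Hi & E). exists i. split; [lia|auto]. Qed.

Lemma content_prefix_content T k z : content_prefix T k z -> content T z.
Proof. intros (i & _ & E). now exists i. Qed.

Lemma content_prefix_S T k z : content_prefix T (S k) z <-> content_prefix T k z \/ T k = Some z.
Proof.
  unfold content_prefix. split.
  - intros (i & Hi & E). destruct (Nat.eq_dec i k) as [->|]; [now right|].
    left. exists i. split; [lia|auto].
  - intros [(i & Hi & E)|E]; [exists i|exists k]; split; auto; lia.
Qed.

Definition new_items_rev (T : text) (k : nat) : list nat :=
  fold_left add_new (map enc_item (prefix T k)) [].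

Definition n_distinct (T : text) (k : nat) : nat := length (new_items_rev T k).

Lemma new_items_rev_S T k : new_items_rev T (S k) = add_new (new_items_rev T k) (enc_item (T k)).
Proof. unfold new_items_rev, prefix. now rewrite seq_S, !map_app, fold_left_app. Qed.

Lemma In_new_items_rev T k e : In e (new_items_rev T k) <-> exists z, e = S z /\ content_prefix T k z.
Proof.
  revert e. induction k as [|k IH]; intros e.
  { simpl. split; [tauto|intros (z & _ & i & H & _); lia]. }
  rewrite new_items_rev_S. unfold add_new. setoid_rewrite content_prefix_S.
  destruct (T k) as [z|] eqn:E; cbn [enc_item].
  - change (negb (S z =? 0)) with true. rewrite andb_true_l.
    destruct (existsb (Nat.eqb (S z)) (new_items_rev T k)) eqn:Ex; cbn [negb In]; rewrite ?IH.
    + apply existsb_eqb_In, IH in Ex as (z' & [= <-] & Hz).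
      split; [intros (y & -> & Hy); eauto|intros (y & -> & [Hy|[= <-]]); eauto].
    + split.
      * intros [<-|(y & -> & Hy)]; eauto.
      * intros (y & -> & [Hy|[= <-]]); [right|left]; eauto.
  - cbn [andb negb Nat.eqb]. rewrite IH.
    split; intros (y & -> & Hy); exists y; intuition discriminate.
Qed.

Lemma zero_notin_new_items_rev T k : ~ In 0 (new_items_rev T k).
Proof. rewrite In_new_items_rev. now intros (z & E & _). Qed.

Lemma NoDup_new_items_rev T k : NoDup (new_items_rev T k).
Proof.
  induction k; [constructor|]. rewrite new_items_rev_S. unfold add_new.
  destruct (negb _ && negb _) eqn:E; auto. constructor; auto.
  apply andb_true_iff in E as [_ E]. rewrite <- existsb_eqb_In. now destruct (existsb _ _).
Qed.

Lemma new_items_rev_app T k k' : k <= k' -> exists t, new_items_rev T k' = t ++ new_items_rev T k.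
Proof.
  induction 1 as [|m _ [t Ht]]; [now exists []|].
  rewrite new_items_rev_S, Ht. unfold add_new. destruct (_ && _).
  - now exists (enc_item (T m) :: t).
  - now exists t.
Qed.

Lemma n_distinct_mono T k k' : k <= k' -> n_distinct T k <= n_distinct T k'.
Proof.
  intros H. destruct (new_items_rev_app T k k' H) as [t Ht].
  unfold n_distinct. rewrite Ht, length_app. lia.
Qed.

Lemma new_items_rev_stable T k k' :
  k <= k' -> set_eq (content_prefix T k) (content_prefix T k') -> new_items_rev T k' = new_items_rev T k.
Proof.
  intros H Heq. induction H as [|m H IH]; [reflexivity|].
  rewrite new_items_rev_S, IH.
  - unfold add_new. destruct (T m) as [z|] eqn:E; [|reflexivity]. cbn [enc_item].
    replace (existsb _ _) with true; [now rewrite andb_false_r|].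
    symmetry. apply existsb_eqb_In, In_new_items_rev.
    exists z. split; [reflexivity|]. apply Heq, content_prefix_S. now right.
  - intros z. split; [apply content_prefix_mono; lia|].
    intros Hz. apply Heq. eapply content_prefix_mono; [|eauto]; lia.
Qed.

Lemma n_distinct_stable T k k' :
  set_eq (content_prefix T k) (content_prefix T k') -> n_distinct T k = n_distinct T k'.
Proof.
  intros H. unfold n_distinct. destruct (Nat.le_ge_cases k k').
  - now rewrite (new_items_rev_stable T k k').
  - rewrite (new_items_rev_stable T k' k); auto. intros z. symmetry. apply H.
Qed.

Definition new_items (T : text) (k : nat) : list nat := rev (new_items_rev T k).

Lemma length_new_items T k : length (new_items T k) = n_distinct T k.
Proof. apply length_rev. Qed.

Lemma nth_new_items_stable T i k k' :
  i < n_distinct T k -> i < n_distinct T k' -> nth i (new_items T k) 0 = nth i (new_items T k') 0.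
Proof.
  assert (Happ : forall k k', k <= k' -> i < n_distinct T k ->
            nth i (new_items T k') 0 = nth i (new_items T k) 0).
  { intros k1 k2 Hk Hi. destruct (new_items_rev_app T k1 k2 Hk) as [t Ht].
    unfold new_items. rewrite Ht, rev_app_distr, app_nth1; [reflexivity|].
    now rewrite length_rev. }
  intros H1 H2. destruct (Nat.le_ge_cases k k'); [symmetry|]; auto.
Qed.

Lemma nth_new_items_succ T k i :
  i < n_distinct T k -> nth i (new_items T k) 0 = S (pred (nth i (new_items T k) 0)).
Proof.
  intros H. rewrite <- length_new_items in H. apply (nth_In _ 0) in H.
  destruct (nth i (new_items T k) 0); [|reflexivity].
  exfalso. apply (zero_notin_new_items_rev T k). now rewrite in_rev.
Qed.

(** Pauses occur only after all of a finite content.  The canonical text is not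
    computable from [T]; the learner only uses its prefix of length [n_distinct T k],
    which is computable from [T[k]]. *)
Definition canonical_text (T : text) (i : nat) : option nat :=
  match excluded_middle_informative (exists k, i < n_distinct T k) with
  | left H => Some (pred (nth i (new_items T (proj1_sig (constructive_indefinite_description _ H))) 0))
  | right _ => None
  end.

Lemma canonical_text_spec T i k :
  i < n_distinct T k -> canonical_text T i = Some (pred (nth i (new_items T k) 0)).
Proof.
  intros H. unfold canonical_text. destruct (excluded_middle_informative _) as [H'|H'].
  - destruct (constructive_indefinite_description _ H') as [k' Hk']. simpl.
    now rewrite (nth_new_items_stable T i k' k).
  - exfalso. eauto.
Qed.

Lemma canonical_text_none T i : (forall k, n_distinct T k <= i) -> canonical_text T i = None.
Proof.
  intros H. unfold canonical_text. destruct (excluded_middle_informative _) as [[k Hk]|]; auto.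
  specialize (H k). lia.
Qed.

Lemma content_prefix_canonical T k z :
  content_prefix (canonical_text T) (n_distinct T k) z <-> content_prefix T k z.
Proof.
  split.
  - intros (i & Hi & E). rewrite (canonical_text_spec T i k Hi) in E. injection E as E.
    pose proof (nth_new_items_succ T k i Hi) as Hs. rewrite E in Hs.
    assert (Hin : In (S z) (new_items_rev T k)).
    { rewrite in_rev, <- Hs. apply nth_In. now rewrite length_rev. }
    now apply In_new_items_rev in Hin as (z' & [= ->] & Hz').
  - intros H. assert (Hin : In (S z) (new_items T k)) by (unfold new_items; rewrite <- in_rev, In_new_items_rev; eauto).
    destruct (In_nth _ _ 0 Hin) as (i & Hi & Hn). rewrite length_new_items in Hi.
    exists i. split; auto. now rewrite (canonical_text_spec T i k Hi), Hn.
Qed.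

Lemma content_canonical T z : content (canonical_text T) z <-> content T z.
Proof.
  split.
  - intros [i E]. destruct (classic (exists k, i < n_distinct T k)) as [[k Hk]|Hn].
    + apply (content_prefix_content T k), content_prefix_canonical. now exists i.
    + rewrite canonical_text_none in E; [discriminate|].
      intros k. destruct (Nat.lt_ge_cases i (n_distinct T k)); [exfalso; eauto|auto].
  - intros [j E]. apply (content_prefix_content _ (n_distinct T (S j))), content_prefix_canonical.
    apply content_prefix_S. now right.
Qed.

Lemma prefix_canonical T k : map enc_item (prefix (canonical_text T) (n_distinct T k)) = new_items T k.
Proof.
  apply nth_ext with (d := 0) (d' := 0); unfold prefix.
  - now rewrite length_new_items, !length_map, length_seq.
  - intros i Hi. rewrite !length_map, length_seq in Hi.
    rewrite (nth_indep _ 0 (enc_item None)) by now rewrite !length_map, length_seq.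
    rewrite map_nth, (nth_indep _ None (canonical_text T 0)) by now rewrite length_map, length_seq.
    rewrite map_nth, seq_nth by exact Hi. simpl.
    rewrite (canonical_text_spec T i k Hi). symmetry. now apply nth_new_items_succ.
Qed.

Lemma enc_set_canonical T k :
  enc_set (content_list (canonical_text T) (n_distinct T k)) = enc_set (content_list T k).
Proof.
  apply enc_set_ext. intros y. now rewrite !In_content_list, content_prefix_canonical.
Qed.

Lemma popcount_enc_set T k :
  popcount_below (enc_set (content_list T k)) (enc_set (content_list T k)) = n_distinct T k.
Proof.
  rewrite <- length_bit_list. unfold n_distinct. set (d := enc_set (content_list T k)).
  assert (Hsame : forall e, In e (bit_list d d) <-> In e (new_items_rev T k)).
  { intros [|z].
    - pose proof (zero_notin_bit_list d d). pose proof (zero_notin_new_items_rev T k). tauto.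
    - unfold d. rewrite In_succ_bit_list_content, In_new_items_rev. split; [eauto|].
      now intros (z' & [= ->] & H). }
  apply Nat.le_antisymm; apply NoDup_incl_length;
    auto using NoDup_bit_list, NoDup_new_items_rev; intros e; apply Hsame.
Qed.

(** * From semantic convergence to semantic witness-based learning *)

Lemma monotone_bounded_stabilizes (a : nat -> nat) B :
  (forall k k', k <= k' -> a k <= a k') -> (forall k, a k < B) ->
  exists k0, forall k, k0 <= k -> a k = a k0.
Proof.
  intros Hmono Hb.
  enough (H : forall d k, B - a k <= d -> exists k0, forall k', k0 <= k' -> a k' = a k0)
    by (apply (H B 0); lia).
  induction d as [|d IH]; intros k Hk; [specialize (Hb k); lia|].
  destruct (classic (forall k', k <= k' -> a k' = a k)) as [H|H]; [eauto|].
  apply not_all_ex_not in H as [j Hj]. apply imply_to_and in Hj as [Hkj Hj].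
  apply (IH j). pose proof (Hmono _ _ Hkj). lia.
Qed.

Section GuardedHypotheses.

Variables (phi : nat -> nat -> nat -> Prop) (T U : text) (a r q : nat -> nat).

Hypothesis content_U : set_eq (content U) (content T).
Hypothesis content_prefix_U : forall k, set_eq (content_prefix U (a k)) (content_prefix T k).
Hypothesis a_mono : forall k k', k <= k' -> a k <= a k'.
Hypothesis a_stable :
  forall k k', set_eq (content_prefix T k) (content_prefix T k') -> a k = a k'.
Hypothesis W_q : forall k z, W phi (q k) z <->
  content_prefix T k z \/ (W phi (r (a k)) z /\ forall y, content_prefix T k y -> W phi (r (a k)) y).
Hypothesis r_conv : SemConv phi r U.

Lemma W_q_content_prefix k z : content_prefix T k z -> W phi (q k) z.
Proof. intros H. apply W_q. now left. Qed.

Lemma W_q_guarded k :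
  (forall y, content_prefix T k y -> W phi (r (a k)) y) -> set_eq (W phi (q k)) (W phi (r (a k))).
Proof. intros Hg z. rewrite W_q. intuition. Qed.

Lemma W_q_stable k k' :
  set_eq (content_prefix T k) (content_prefix T k') -> set_eq (W phi (q k)) (W phi (q k')).
Proof.
  intros Heq z. rewrite !W_q, (a_stable k k' Heq). unfold set_eq in Heq.
  setoid_rewrite Heq. reflexivity.
Qed.

Lemma semwb_guarded : SemWb phi q T.
Proof.
  intros n m (k & Hnk & Hkm & Hne). apply NNPP. intros Hno. apply Hne. clear Hne.
  assert (Hsub : forall x, content_prefix T m x -> W phi (q n) x).
  { intros x Hx. apply NNPP. intros Hx'. apply Hno. exists x.
    split; [|split]; auto using W_q_content_prefix. }
  destruct (classic (set_eq (content_prefix T n) (content_prefix T k))) as [Heq|Hneq];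
    [now apply W_q_stable|].
  assert (Hy : exists y, content_prefix T k y /\ ~ content_prefix T n y).
  { apply NNPP. intros Hn. apply Hneq. intros z. split; [apply content_prefix_mono; lia|].
    intros Hz. apply NNPP. eauto. }
  destruct Hy as (y & Hyk & Hyn).
  (* a new datum [y] in [W_(q n)] means the guard of [q n] is satisfied *)
  assert (Hguard_n : forall y, content_prefix T n y -> W phi (r (a n)) y).
  { assert (Hym : content_prefix T m y) by (eapply content_prefix_mono; [|eauto]; lia).
    apply Hsub, W_q in Hym as [|[_ Hg]]; [contradiction|exact Hg]. }
  assert (Hlt : a n < a k).
  { pose proof (a_mono _ _ Hnk). enough (a n <> a k) by lia. intros E. apply Hneq.
    intros z. now rewrite <- (content_prefix_U n z), E, (content_prefix_U k z). }
  assert (Hconv : set_eq (W phi (r (a n))) (W phi (r (a k)))).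
  { apply r_conv; [exact Hlt|]. intros x Hx. apply (W_q_guarded n Hguard_n), Hsub.
    apply content_prefix_U in Hx. eapply content_prefix_mono; [|eauto]; lia. }
  assert (Hguard_k : forall y, content_prefix T k y -> W phi (r (a k)) y).
  { intros x Hx. apply Hconv, (W_q_guarded n Hguard_n), Hsub.
    eapply content_prefix_mono; [|eauto]; lia. }
  intros z. now rewrite (W_q_guarded n Hguard_n z), (W_q_guarded k Hguard_k z).
Qed.

Lemma content_prefix_stabilizes B :
  (forall k, a k < B) -> exists k0, forall k, k0 <= k -> set_eq (content_prefix T k) (content T).
Proof.
  intros Hb. destruct (monotone_bounded_stabilizes a B a_mono Hb) as [k0 Hk0].
  assert (Hconst : forall k, k0 <= k -> set_eq (content_prefix T k) (content_prefix T k0)).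
  { intros k Hk z. now rewrite <- (content_prefix_U k z), <- (content_prefix_U k0 z), (Hk0 k Hk). }
  exists k0. intros k Hk z. split; [apply content_prefix_content|].
  intros [j Hj]. apply (Hconst k Hk), (Hconst (max k (S j))); [lia|].
  exists j. split; [lia|auto].
Qed.

Lemma bc_guarded : Bc phi r U -> Bc phi q T.
Proof.
  intros [i0 Hi0].
  assert (Hlate : forall k, i0 <= a k -> set_eq (W phi (q k)) (content T)).
  { intros k Hk.
    assert (Hguard : forall y, content_prefix T k y -> W phi (r (a k)) y).
    { intros y Hy. apply (Hi0 (a k) Hk), content_U. eapply content_prefix_content; eauto. }
    intros z. rewrite (W_q_guarded k Hguard z), (Hi0 (a k) Hk z). apply content_U. }
  destruct (classic (exists k, i0 <= a k)) as [[k1 Hk1]|Hearly].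
  - exists k1. intros k Hk. apply Hlate. pose proof (a_mono _ _ Hk). lia.
  - destruct (content_prefix_stabilizes i0) as [k0 Hk0].
    { intros k. destruct (Nat.lt_ge_cases (a k) i0); [auto|exfalso; eauto]. }
    exists k0. intros k Hk z. rewrite W_q. split; [|intros H; left; now apply Hk0].
    intros [H|[H Hguard]]; [eapply content_prefix_content; eauto|].
    (* [T[k]] already shows the whole finite content, so the guard lets [r_conv] apply *)
    assert (Hconv : set_eq (W phi (r (a k))) (W phi (r (max i0 (S (a k)))))).
    { apply r_conv; [lia|]. intros x Hx. apply Hguard, Hk0, content_U; [auto|].
      eapply content_prefix_content; eauto. }
    apply content_U, (Hi0 (max i0 (S (a k)))), Hconv; [lia|exact H].
Qed.

End GuardedHypotheses.

Lemma semwb_semconv phi p T : SemWb phi p T -> SemConv phi p T.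
Proof.
  intros H n m Hnm Hsub. apply NNPP. intros Hne.
  destruct (H n m) as (x & Hx & _ & Hxn); [exists m; repeat split; auto; lia|].
  now apply Hxn, Hsub.
Qed.

(** * The learner *)

(** At stage [k] of [T], [CCanonicalInput] computes the input of [h] at stage
    [n_distinct T k] of the canonical text, and [CDataList] the data of [T[k]] as a list
    of [enc_item]s. *)
Definition CCanonicalInput (b : interaction) : code :=
  match b with G => CDistinct | Psd => CPair CFst (CComp CPopcount CFst) | Sd => CId end.

Definition CDataList (b : interaction) : code :=
  match b with G => CId | Psd => CComp CBits CFst | Sd => CBits end.

Definition data_list (b : interaction) (T : text) (k : nat) : list nat :=
  match b with
  | G => map enc_item (prefix T k)
  | _ => bit_list (enc_set (content_list T k)) (enc_set (content_list T k))
  end.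

Lemma In_data_list b T k z : In (S z) (data_list b T k) <-> content_prefix T k z.
Proof.
  destruct b; try apply In_succ_bit_list_content. cbn [data_list]. unfold prefix, content_prefix.
  rewrite map_map, in_map_iff. setoid_rewrite in_seq.
  split.
  - intros (i & E & Hi). exists i. destruct (T i); [injection E as ->|discriminate].
    split; [lia|reflexivity].
  - intros (i & Hi & E). exists i. rewrite E. split; [reflexivity|lia].
Qed.

Definition CLearner (b : interaction) (h cf cg : nat) : code :=
  CComp (decode cg) (CComp (CFill guarded_template)
    (CPair (CComp (decode cf) (CComp (decode h) (CCanonicalInput b))) (CComp CConstNumber (CDataList b)))).

Section Learner.

Variables (phi : nat -> nat -> nat -> Prop) (f g : nat -> nat) (cf cg : nat).
Hypothesis Hcf : forall z, psi cf z (f z).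
Hypothesis Hcg : forall z, psi cg z (g z).
Hypothesis Hf : forall e x y, phi e x y <-> psi (f e) x y.
Hypothesis Hg : forall e x y, psi e x y <-> phi (g e) x y.

Lemma ev_learner b h x u l e :
  ev (CCanonicalInput b) x u -> ev (CDataList b) x l -> psi h u e ->
  ev (CLearner b h cf cg) x (guarded_index f g e l).
Proof.
  intros Hu Hl He. unfold CLearner, guarded_index.
  ev_steps; eauto using ev_const_number, ev_fill; [apply Hcf|apply Hcg].
Qed.

Lemma run_learner b h T k e :
  run b h (canonical_text T) (n_distinct T k) e ->
  run b (enc (CLearner b h cf cg)) T k (guarded_index f g e (enc_list (data_list b T k))).
Proof.
  destruct b; unfold run; intros He;
    apply psi_enc; (eapply ev_learner; [| |exact He]);
    cbn [CCanonicalInput CDataList data_list].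
  - unfold enc_seq. rewrite prefix_canonical. apply ev_distinct.
  - apply ev_id.
  - ev_steps; [rewrite enc_set_canonical; apply ev_fst_pair|].
    rewrite <- popcount_enc_set. apply ev_popcount.
  - ev_steps. apply ev_bits.
  - rewrite enc_set_canonical. apply ev_id.
  - apply ev_bits.
Qed.
Lemma learner_on_text b h T r :
  (forall i, run b h (canonical_text T) i (r i)) -> SemConv phi r (canonical_text T) ->
  exists q, (forall k, run b (enc (CLearner b h cf cg)) T k (q k)) /\
            SemWb phi q T /\ (Bc phi r (canonical_text T) -> Bc phi q T).
Proof.
  intros Hr Hconv.
  set (q k := guarded_index f g (r (n_distinct T k)) (enc_list (data_list b T k))).
  assert (W_q : forall k z, W phi (q k) z <-> content_prefix T k z \/
    (W phi (r (n_distinct T k)) z /\ forall y, content_prefix T k y -> W phi (r (n_distinct T k)) y)).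
  { intros k z. unfold q. rewrite W_guarded_index by auto. now setoid_rewrite In_data_list. }
  exists q. split; [intros k; exact (run_learner b h T k _ (Hr _))|]. split.
  - exact (semwb_guarded phi T _ _ r q (content_prefix_canonical T) (n_distinct_mono T)
             (n_distinct_stable T) W_q Hconv).
  - exact (bc_guarded phi T _ _ r q (content_canonical T) (content_prefix_canonical T)
             (n_distinct_mono T) W_q Hconv).
Qed.

End Learner.

Lemma run_det b h T i y y' : run b h T i y -> run b h T i y' -> y = y'.
Proof. destruct b; apply ev_det. Qed.

Theorem theorem14 (phi : nat -> nat -> nat -> Prop) (Hphi : acceptable phi)
  (b : interaction) (C : (nat -> Prop) -> Prop) :
  learnable phi (SemWb phi) b C <-> learnable phi (SemConv phi) b C.
Proof.
  split.
  - intros (h & Hall & Hlearn). exists h. split; [|exact Hlearn].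
    intros T. destruct (Hall T) as (p & Hp & Hwb). exists p. split; [exact Hp|].
    now apply semwb_semconv.
  - intros (h & Hall & Hlearn).
    destruct Hphi as (f & g & [cf Hcf] & [cg Hcg] & Hf & Hg).
    exists (enc (CLearner b h cf cg)). split.
    + intros T. destruct (Hall (canonical_text T)) as (r & Hr & Hconv).
      destruct (learner_on_text phi f g cf cg Hcf Hcg Hf Hg b h T r Hr Hconv)
        as (q & Hq & Hwb & _).
      now exists q.
    + intros L HL T HT. destruct (Hall (canonical_text T)) as (r & Hr & Hconv).
      destruct (learner_on_text phi f g cf cg Hcf Hcg Hf Hg b h T r Hr Hconv)
        as (q & Hq & _ & Hbc).
      exists q. split; [exact Hq|]. apply Hbc.
      destruct (Hlearn L HL (canonical_text T)) as (p & Hp & [n0 Hn0]).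
      { intros z. now rewrite content_canonical. }
      exists n0. intros n Hn. rewrite <- (run_det _ _ _ _ _ _ (Hp n) (Hr n)). now apply Hn0.
Qed.
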